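(* Let $y_0\in\mathbb{R}$, $b>0$, $\epsilon>0$, and let $f:[y_0,\infty)\to\mathbb{R}$ be such that $p:=1/f$ is well defined and twice differentiable on $[y_0,\infty)$, with $f(y_0)>0$, $f'(y)>0$ and $p''(y)>0$ for all $y\ge y_0$. Assume $b<\int_{y_0}^{\infty}p(y)\,dy$ (possibly $+\infty$). For $h>0$ and integers $N\ge0$ define $$\Sigma_{l,h,N}=\sum_{i=1}^{N}h\,p(y_0+hi),\qquad \Sigma_{t,h,N}=\sum_{i=1}^{N}\frac h2\big(p(y_0+hi)+p(y_0+h(i-1))\big).$$ For each positive integer $j$ let $h^{(j)}=\epsilon/j$, let $n_2^{(j)}$ be the smallest positive integer $N$ with $\Sigma_{l,h^{(j)},N}\ge b$ (assume $n_2^{(1)}$ exists), and let $n_3^{(j)}$ be the largest integer $N\ge0$ with $\Sigma_{t,h^{(j)},N}\le b$. Assume $n_3^{(1)}\ge1$. If $j$ is a positive integer such that $\Sigma_{t,h^{(j)},\,n_2^{(j)}-j}\le b$ (i.e. Algorithm 1, which for $j=1,2,\dots$ stops at the first $j$ with this inequality, can stop at iteration $j$), then $$j>1+\frac12\cdot\frac{p(y_0)-p\big(y_0+h^{(1)}n_3^{(1)}-h^{(1)}\big)-2\,p\big(y_0+h^{(1)}n_3^{(1)}\big)}{2\,p\big(y_0+h^{(1)}n_3^{(1)}-h^{(1)}\big)}.$$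
   Context: $\Sigma_{l,h,N}$ and $\Sigma_{t,h,N}$ are the lower rectangular and trapezoidal sums with step $h$ for $\int_{y_0}^{y_0+hN}p(y)\,dy$; empty sums are $0$. Here $h^{(1)}=\epsilon$. *)

From Stdlib Require Import Reals Lra.
From Coquelicot Require Import Coquelicot.
Open Scope R_scope.

Definition is_derive_halfline (g : R -> R) (y0 y l : R) : Prop :=
  filterlim (fun x => (g x - g y) / (x - y))
    (within (fun x => y0 <= x /\ x <> y) (locally y)) (locally l).

Fixpoint sigma_l (p : R -> R) (y0 h : R) (N : nat) : R :=
  match N with
  | O => 0
  | S n => sigma_l p y0 h n + h * p (y0 + h * INR (S n))
  end.

Fixpoint sigma_t (p : R -> R) (y0 h : R) (N : nat) : R :=
  match N with
  | O => 0
  | S n => sigma_t p y0 h n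
           + h / 2 * (p (y0 + h * INR (S n)) + p (y0 + h * INR n))
  end.

Definition is_n2 (p : R -> R) (y0 eps b : R) (j n : nat) : Prop :=
  (1 <= n)%nat /\ b <= sigma_l p y0 (eps / INR j) n /\
  (forall m : nat, (1 <= m)%nat -> (m < n)%nat -> sigma_l p y0 (eps / INR j) m < b).

Definition is_n3 (p : R -> R) (y0 eps b : R) (j n : nat) : Prop :=
  sigma_t p y0 (eps / INR j) n <= b /\
  (forall m : nat, (n < m)%nat -> b < sigma_t p y0 (eps / INR j) m).

(* By the mean value theorem, p = 1/f is positive, strictly decreasing and
   convex on [y0, +oo).
   Convexity puts each fine sample p(y0 + (eps/j) i) under the chord of the
   coarse cell of width eps containing it, so j*n lower sums with step eps/j
   stay below n trapezoidal sums with step eps; hence n_2^(j) > j n_3^(1).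
   When the algorithm stops at j, comparing Sigma_t(n_2^(j) - j) <= b with
   Sigma_l(n_2^(j)) >= b and using monotonicity of p on the last j cells gives
   p(y0) <= 2 p(E) + (2j - 1) p(E - eps) with E = y0 + (eps/j) n_2^(j); since
   E > y0 + eps n_3^(1), solving for j gives the bound. *)
From Stdlib Require Import Reals Lra Lia.
From Coquelicot Require Import Coquelicot.
Open Scope R_scope.

Lemma is_derive_halfline_quotient g y0 y l : is_derive_halfline g y0 y l ->
  forall e, 0 < e -> exists d, 0 < d /\
    forall x, Rabs (x - y) < d -> y0 <= x -> x <> y ->
    Rabs ((g x - g y) / (x - y) - l) < e.
Proof.
  intros H e He.
  destruct (H (fun z => Rabs (z - l) < e)) as [d Hd].
  { exists (mkposreal e He); intros z Hz; exact Hz. }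
  exists d; split; [apply cond_pos|].
  intros x Hx H1 H2; exact (Hd x Hx (conj H1 H2)).
Qed.

(* [g (Rmax y0 x)] extends [g] to the whole line, constantly on (-oo, y0];
   it is the function the two-sided library results are applied to. *)
Lemma is_derive_halfline_continuity g y0 y l : y0 <= y ->
  is_derive_halfline g y0 y l -> continuity_pt (fun x => g (Rmax y0 x)) y.
Proof.
  intros Hy H e He.
  destruct (is_derive_halfline_quotient _ _ _ _ H 1 Rlt_0_1) as [d [Hd Hq]].
  assert (HL : 0 < Rabs l + 1) by (pose proof (Rabs_pos l); lra).
  exists (Rmin d (e / (Rabs l + 1))); split.
  { apply Rmin_pos; [lra | apply Rdiv_lt_0_compat; lra]. }
  intros x [_ Hxd]; simpl in *; unfold R_dist in *.
  rewrite (Rmax_right y0 y Hy).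
  set (x' := Rmax y0 x).
  assert (Hx' : Rabs (x' - y) <= Rabs (x - y)).
  { unfold x', Rmax; destruct (Rle_dec y0 x); [lra|].
    rewrite !Rabs_left1; lra. }
  assert (Hy0 : y0 <= x') by apply Rmax_l.
  pose proof (Rmin_l d (e / (Rabs l + 1))).
  pose proof (Rmin_r d (e / (Rabs l + 1))).
  destruct (Req_dec x' y) as [E | E].
  { rewrite E, Rminus_diag, Rabs_R0; lra. }
  specialize (Hq x' ltac:(lra) Hy0 E).
  set (q := (g x' - g y) / (x' - y)) in Hq.
  assert (Hgq : g x' - g y = q * (x' - y)) by (unfold q; field; lra).
  assert (Hqb : Rabs q <= Rabs l + 1).
  { replace q with (q - l + l) by ring.
    eapply Rle_trans; [apply Rabs_triang | lra]. }
  rewrite Hgq, Rabs_mult.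
  apply Rle_lt_trans with ((Rabs l + 1) * Rabs (x' - y)).
  { apply Rmult_le_compat_r; [apply Rabs_pos | exact Hqb]. }
  apply Rlt_le_trans with ((Rabs l + 1) * (e / (Rabs l + 1))).
  { apply Rmult_lt_compat_l; lra. }
  right; field; lra.
Qed.

Lemma is_derive_halfline_interior g y0 y l : y0 < y ->
  is_derive_halfline g y0 y l -> is_derive (fun x => g (Rmax y0 x)) y l.
Proof.
  intros Hy H; apply is_derive_Reals; intros e He.
  destruct (is_derive_halfline_quotient _ _ _ _ H e He) as [d [Hd Hq]].
  assert (Hp : 0 < Rmin d (y - y0)) by (apply Rmin_pos; lra).
  exists (mkposreal _ Hp); intros h Hh Hhd; simpl in Hhd.
  pose proof (Rmin_l d (y - y0)); pose proof (Rmin_r d (y - y0)).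
  pose proof (Rle_abs h); pose proof (Rle_abs (- h)); rewrite Rabs_Ropp in *.
  rewrite (Rmax_right y0 (y + h)), (Rmax_right y0 y) by lra.
  specialize (Hq (y + h)); replace (y + h - y) with h in Hq by ring.
  apply Hq; lra.
Qed.

Lemma halfline_MVT g d y0 a b :
  (forall y, y0 <= y -> is_derive_halfline g y0 y (d y)) ->
  y0 <= a -> a < b -> exists c, a <= c <= b /\ g b - g a = d c * (b - a).
Proof.
  intros H Ha Hab.
  destruct (MVT_gen (fun x => g (Rmax y0 x)) a b d) as [c [Hc E]].
  - intros x Hx; rewrite Rmin_left, Rmax_right in Hx by lra.
    apply is_derive_halfline_interior; [lra | apply H; lra].
  - intros x Hx; rewrite Rmin_left, Rmax_right in Hx by lra.
    apply (is_derive_halfline_continuity _ _ _ (d x)); [lra | apply H; lra].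
  - rewrite Rmin_left, Rmax_right in Hc by lra.
    rewrite (Rmax_right y0 a), (Rmax_right y0 b) in E by lra.
    exists c; split; assumption.
Qed.

Lemma halfline_increasing g d y0 :
  (forall y, y0 <= y -> is_derive_halfline g y0 y (d y)) ->
  (forall y, y0 <= y -> 0 < d y) ->
  forall a c, y0 <= a -> a < c -> g a < g c.
Proof.
  intros Hg Hd a c Ha Hac.
  destruct (halfline_MVT g d y0 a c Hg Ha Hac) as [x [Hx E]].
  assert (0 < d x * (c - a)) by (apply Rmult_lt_0_compat; [apply Hd | ]; lra).
  lra.
Qed.

Lemma halfline_convex g d y0 :
  (forall y, y0 <= y -> is_derive_halfline g y0 y (d y)) ->
  (forall a c, y0 <= a -> a <= c -> d a <= d c) ->
  forall x w t, y0 <= x -> x < w -> 0 <= t <= 1 ->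
  g (x + t * (w - x)) <= (1 - t) * g x + t * g w.
Proof.
  intros Hg Hd x w t Hx Hxw Ht.
  destruct (Req_dec t 0) as [-> | Ht0].
  { replace (x + 0 * (w - x)) with x by ring; lra. }
  destruct (Req_dec t 1) as [-> | Ht1].
  { replace (x + 1 * (w - x)) with w by ring; lra. }
  set (z := x + t * (w - x)).
  assert (0 < t * (w - x)) by (apply Rmult_lt_0_compat; lra).
  assert (0 < (1 - t) * (w - x)) by (apply Rmult_lt_0_compat; lra).
  destruct (halfline_MVT g d y0 x z Hg Hx ltac:(unfold z; lra))
    as [c1 [Hc1 E1]].
  destruct (halfline_MVT g d y0 z w Hg ltac:(unfold z; lra) ltac:(unfold z; lra))
    as [c2 [Hc2 E2]].
  assert (Hc12 : d c1 <= d c2) by (apply Hd; lra).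
  replace (z - x) with (t * (w - x)) in E1 by (unfold z; ring).
  replace (w - z) with ((1 - t) * (w - x)) in E2 by (unfold z; ring).
  assert (Hst : 0 <= t * ((1 - t) * (w - x))) by (apply Rmult_le_pos; lra).
  assert (d c1 * (t * ((1 - t) * (w - x))) <= d c2 * (t * ((1 - t) * (w - x))))
    by (apply Rmult_le_compat_r; assumption).
  assert ((1 - t) * (g z - g x) = d c1 * (t * ((1 - t) * (w - x))))
    by (rewrite E1; ring).
  assert (t * (g w - g z) = d c2 * (t * ((1 - t) * (w - x))))
    by (rewrite E2; ring).
  lra.
Qed.

Section RiemannSums.

Variables (p : R -> R) (y0 : R).
Hypothesis p_pos : forall y, y0 <= y -> 0 < p y.
Hypothesis p_decr : forall x z, y0 <= x -> x < z -> p z < p x.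
Hypothesis p_convex : forall x w t, y0 <= x -> x < w -> 0 <= t <= 1 ->
  p (x + t * (w - x)) <= (1 - t) * p x + t * p w.

Lemma p_nonincr x z : y0 <= x -> x <= z -> p z <= p x.
Proof.
  intros Hx Hxz; destruct (Req_dec x z) as [<- | ]; [lra|].
  left; apply p_decr; lra.
Qed.

Lemma grid_ge h N : 0 < h -> y0 <= y0 + h * INR N.
Proof. intros Hh; pose proof (pos_INR N); nra. Qed.

Lemma sigma_t_sigma_l h N :
  sigma_t p y0 h N = sigma_l p y0 h N + h / 2 * (p y0 - p (y0 + h * INR N)).
Proof.
  induction N as [|n IH]; cbn [sigma_t sigma_l].
  - replace (y0 + h * INR 0) with y0 by (simpl; ring); ring.
  - rewrite IH; lra.
Qed.

Lemma sigma_l_nondecr h N M : 0 < h -> (N <= M)%nat ->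
  sigma_l p y0 h N <= sigma_l p y0 h M.
Proof.
  intros Hh H; induction H as [|m _ IH]; [lra|].
  cbn [sigma_l].
  pose proof (p_pos _ (grid_ge h (S m) Hh)); nra.
Qed.

(* Every trapezoid after the M-th node is bounded using p <= p(y0 + h M),
   except for the half weight h/2 on the last node. *)
Lemma sigma_t_increment_le h M k : 0 < h ->
  sigma_t p y0 h (M + k) - sigma_t p y0 h M <=
  h / 2 * p (y0 + h * INR (M + k)) + h * (INR k - / 2) * p (y0 + h * INR M).
Proof.
  intros Hh; induction k as [|k IH].
  - rewrite Nat.add_0_r; simpl INR; lra.
  - rewrite Nat.add_succ_r; cbn [sigma_t].
    assert (p (y0 + h * INR (M + k)) <= p (y0 + h * INR M)).
    { apply p_nonincr; [apply grid_ge; lra|].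
      apply Rplus_le_compat_l, Rmult_le_compat_l; [lra|].
      apply le_INR; lia. }
    assert (h * p (y0 + h * INR (M + k)) <= h * p (y0 + h * INR M))
      by (apply Rmult_le_compat_l; lra).
    rewrite (S_INR k); lra.
Qed.

(* Sample k of the m-th coarse cell [x, x + eps] lies below the chord value
   (1 - k/j) p(x) + (k/j) p(x + eps); summing the chord values over k gives
   the closed form. *)
Lemma sigma_l_refined_cell_le eps j m k : 0 < eps -> (1 <= j)%nat -> (k <= j)%nat ->
  sigma_l p y0 (eps / INR j) (j * m + k) - sigma_l p y0 (eps / INR j) (j * m) <=
  eps / INR j * (INR k * p (y0 + eps * INR m)
    - INR k * (INR k + 1) / (2 * INR j)
      * (p (y0 + eps * INR m) - p (y0 + eps * INR m + eps))).
Proof.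
  intros He Hj Hk.
  set (h := eps / INR j); set (x := y0 + eps * INR m).
  assert (HJ : 1 <= INR j) by (apply (le_INR 1); exact Hj).
  assert (Hh : 0 < h) by (unfold h; apply Rdiv_lt_0_compat; lra).
  assert (Hx : y0 <= x) by (apply grid_ge; exact He).
  induction k as [|k IH].
  - rewrite Nat.add_0_r; simpl INR; lra.
  - rewrite Nat.add_succ_r; cbn [sigma_l].
    specialize (IH ltac:(lia)).
    set (t := INR (S k) / INR j).
    assert (Ht : 0 <= t <= 1).
    { assert (INR (S k) <= INR j) by (apply le_INR; exact Hk).
      unfold t; split.
      - apply Rdiv_le_0_compat; [apply pos_INR | lra].
      - apply (Rdiv_le_1 (INR (S k)) (INR j)); lra. }
    assert (E : y0 + h * INR (S (j * m + k)) = x + t * (x + eps - x)).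
    { unfold h, x, t; rewrite <- Nat.add_succ_r, plus_INR, mult_INR; field; lra. }
    rewrite E.
    pose proof (p_convex x (x + eps) t Hx ltac:(lra) Ht) as C.
    assert (h * p (x + t * (x + eps - x)) <= h * ((1 - t) * p x + t * p (x + eps)))
      by (apply Rmult_le_compat_l; lra).
    enough (h * (INR (S k) * p x
                 - INR (S k) * (INR (S k) + 1) / (2 * INR j) * (p x - p (x + eps)))
            = h * (INR k * p x - INR k * (INR k + 1) / (2 * INR j) * (p x - p (x + eps)))
              + h * ((1 - t) * p x + t * p (x + eps))) by lra.
    unfold t; rewrite S_INR; field; lra.
Qed.

Lemma sigma_l_refined_cell_lt eps j m : 0 < eps -> (1 <= j)%nat ->
  sigma_l p y0 (eps / INR j) (j * S m) - sigma_l p y0 (eps / INR j) (j * m) <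
  eps / 2 * (p (y0 + eps * INR (S m)) + p (y0 + eps * INR m)).
Proof.
  intros He Hj.
  assert (HJ : 1 <= INR j) by (apply (le_INR 1); exact Hj).
  pose proof (sigma_l_refined_cell_le eps j m j He Hj (le_n _)) as B.
  rewrite <- Nat.mul_succ_r in B.
  set (x := y0 + eps * INR m) in *.
  replace (y0 + eps * INR (S m)) with (x + eps) by (unfold x; rewrite S_INR; ring).
  assert (D : p (x + eps) < p x) by (apply p_decr; [apply grid_ge|]; lra).
  eapply Rle_lt_trans; [exact B|].
  assert (0 < eps / (2 * INR j) * (p x - p (x + eps)))
    by (apply Rmult_lt_0_compat; [apply Rdiv_lt_0_compat|]; lra).
  enough (eps / INR j * (INR j * p x
            - INR j * (INR j + 1) / (2 * INR j) * (p x - p (x + eps)))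
          = eps / 2 * (p (x + eps) + p x) - eps / (2 * INR j) * (p x - p (x + eps)))
    by lra.
  field; lra.
Qed.

Lemma sigma_l_refined_le_sigma_t eps j n : 0 < eps -> (1 <= j)%nat ->
  sigma_l p y0 (eps / INR j) (j * n) <= sigma_t p y0 eps n.
Proof.
  intros He Hj; induction n as [|n IH].
  - rewrite Nat.mul_0_r; simpl; lra.
  - pose proof (sigma_l_refined_cell_lt eps j n He Hj); cbn [sigma_t]; lra.
Qed.

Lemma sigma_l_refined_lt_sigma_t eps j n : 0 < eps -> (1 <= j)%nat ->
  sigma_l p y0 (eps / INR j) (j * S n) < sigma_t p y0 eps (S n).
Proof.
  intros He Hj.
  pose proof (sigma_l_refined_cell_lt eps j n He Hj).
  pose proof (sigma_l_refined_le_sigma_t eps j n He Hj).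
  cbn [sigma_t]; lra.
Qed.

Lemma n2_gt_refined_n3 eps b j n2 n3 : 0 < eps -> (1 <= j)%nat -> (1 <= n3)%nat ->
  is_n3 p y0 eps b 1 n3 -> is_n2 p y0 eps b j n2 -> (j * n3 < n2)%nat.
Proof.
  intros He Hj Hn3 [Hn3b _] [_ [Hn2b _]].
  replace (eps / INR 1) with eps in Hn3b by (simpl; field).
  destruct n3 as [|n3]; [lia|].
  pose proof (sigma_l_refined_lt_sigma_t eps j n3 He Hj).
  destruct (Nat.lt_ge_cases (j * S n3) n2) as [| Hle]; [assumption|].
  assert (0 < eps / INR j)
    by (apply Rdiv_lt_0_compat; [lra | apply (lt_INR 0); lia]).
  pose proof (sigma_l_nondecr (eps / INR j) _ _ ltac:(assumption) Hle); lra.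
Qed.

Lemma stopping_bound h b M k : 0 < h ->
  sigma_t p y0 h M <= b -> b <= sigma_l p y0 h (M + k) ->
  p y0 <= 2 * p (y0 + h * INR (M + k)) + (2 * INR k - 1) * p (y0 + h * INR M).
Proof.
  intros Hh HM HMk.
  pose proof (sigma_t_sigma_l h (M + k)).
  pose proof (sigma_t_increment_le h M k Hh).
  apply Rmult_le_reg_l with (h / 2); lra.
Qed.

Lemma stopping_index_bound eps b j n2 n3 : 0 < eps -> (1 <= j)%nat -> (1 <= n3)%nat ->
  is_n3 p y0 eps b 1 n3 -> is_n2 p y0 eps b j n2 ->
  sigma_t p y0 (eps / INR j) (n2 - j) <= b ->
  INR j > 1 + / 2 *
    ((p y0 - p (y0 + eps * INR n3 - eps) - 2 * p (y0 + eps * INR n3))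
     / (2 * p (y0 + eps * INR n3 - eps))).
Proof.
  intros He Hj Hn3 Hn3_def Hn2_def Hstop.
  pose proof (n2_gt_refined_n3 eps b j n2 n3 He Hj Hn3 Hn3_def Hn2_def) as Hgt.
  destruct Hn2_def as [_ [Hn2b _]].
  assert (HJ : 1 <= INR j) by (apply (le_INR 1); exact Hj).
  set (h := eps / INR j) in *.
  assert (Hh : 0 < h) by (unfold h; apply Rdiv_lt_0_compat; lra).
  replace n2 with (n2 - j + j)%nat in Hn2b at 1 by nia.
  pose proof (stopping_bound h b (n2 - j) j Hh Hstop Hn2b) as Hbound.
  rewrite (Nat.sub_add j n2) in Hbound by nia.
  set (a := y0 + eps * INR n3); set (E := y0 + h * INR n2).
  assert (HjE : INR j * INR n3 < INR n2) by (rewrite <- mult_INR; apply lt_INR; exact Hgt).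
  assert (HaE : a < E).
  { unfold a, E, h; apply Rplus_lt_compat_l.
    apply Rmult_lt_reg_l with (INR j); [lra|].
    replace (INR j * (eps / INR j * INR n2)) with (eps * INR n2) by (field; lra).
    nra. }
  change (y0 + h * INR n2) with E in Hbound.
  replace (y0 + h * INR (n2 - j)) with (E - eps) in Hbound
    by (unfold E, h; rewrite minus_INR by nia; field; lra).
  assert (1 <= INR n3) by (apply (le_INR 1); exact Hn3).
  assert (Ha : y0 <= a - eps) by (unfold a; nra).
  assert (p E < p a) by (apply p_decr; lra).
  assert (p (E - eps) < p (a - eps)) by (apply p_decr; lra).
  assert (Hq : 0 < p (a - eps)) by (apply p_pos; lra).
  assert (0 <= (2 * INR j - 2) * p (a - eps)) by (apply Rmult_le_pos; lra).
  assert ((2 * INR j - 1) * p (E - eps) <= (2 * INR j - 1) * p (a - eps))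
    by (apply Rmult_le_compat_l; lra).
  enough ((p y0 - p (a - eps) - 2 * p a) / (2 * p (a - eps)) < 2 * (INR j - 1))
    by lra.
  apply Rmult_lt_reg_r with (2 * p (a - eps)); [lra|].
  replace ((p y0 - p (a - eps) - 2 * p a) / (2 * p (a - eps)) * (2 * p (a - eps)))
    with (p y0 - p (a - eps) - 2 * p a) by (field; lra).
  lra.
Qed.

End RiemannSums.

Theorem theorem2 (y0 b eps : R) (f : R -> R) :
  0 < b -> 0 < eps ->
  (forall y, y0 <= y -> f y <> 0) ->
  0 < f y0 ->
  (exists f' : R -> R,
      (forall y, y0 <= y -> is_derive_halfline f y0 y (f' y)) /\
      (forall y, y0 <= y -> 0 < f' y)) ->
  (exists p1 p2 : R -> R,
      (forall y, y0 <= y -> is_derive_halfline (fun x => / f x) y0 y (p1 y)) /\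
      (forall y, y0 <= y -> is_derive_halfline p1 y0 y (p2 y)) /\
      (forall y, y0 <= y -> 0 < p2 y)) ->
  (exists I : Rbar,
      is_lim (fun X => RInt (fun x => / f x) y0 X) p_infty I /\ Rbar_lt b I) ->
  (exists n, is_n2 (fun x => / f x) y0 eps b 1 n) ->
  forall n3 : nat, is_n3 (fun x => / f x) y0 eps b 1 n3 -> (1 <= n3)%nat ->
  forall j n2j : nat, (1 <= j)%nat ->
  is_n2 (fun x => / f x) y0 eps b j n2j ->
  sigma_t (fun x => / f x) y0 (eps / INR j) (n2j - j) <= b ->
  INR j > 1 + / 2 *
    ((/ f y0 - / f (y0 + eps * INR n3 - eps) - 2 * / f (y0 + eps * INR n3))
     / (2 * / f (y0 + eps * INR n3 - eps))).
Proof.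
  intros _ He _ Hfy0 [f' [Hf' Hf'_pos]] [p1 [p2 [Hp1 [Hp2 Hp2_pos]]]] _ _
    n3 Hn3_def Hn3 j n2j Hj Hn2_def Hstop.
  pose proof (halfline_increasing f f' y0 Hf' Hf'_pos) as f_incr.
  assert (f_pos : forall y, y0 <= y -> 0 < f y).
  { intros y Hy; destruct (Req_dec y0 y) as [<- | ]; [exact Hfy0|].
    apply Rlt_trans with (f y0); [exact Hfy0 | apply f_incr; lra]. }
  assert (p1_nondecr : forall a c, y0 <= a -> a <= c -> p1 a <= p1 c).
  { intros a c Ha Hac; destruct (Req_dec a c) as [<- | ]; [lra|].
    left; apply (halfline_increasing p1 p2 y0 Hp2 Hp2_pos); lra. }
  refine (stopping_index_bound (fun x => / f x) y0 _ _ _ eps b j n2j n3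
            He Hj Hn3 Hn3_def Hn2_def Hstop).
  - intros y Hy; apply Rinv_0_lt_compat, f_pos, Hy.
  - intros x z Hx Hxz; apply Rinv_lt_contravar;
      [apply Rmult_lt_0_compat; apply f_pos | apply f_incr]; lra.
  - exact (halfline_convex _ p1 y0 Hp1 p1_nondecr).
Qed.
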